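(* Let $G=(V,E)$ be an infinite, connected graph with finite maximum degree, Cheeger constant $C_G$ and contour constant $R_G$. Then $$R_G\ge \frac{C_G}{C_G+1}.$$ In particular, $R_G>0$ whenever $C_G>0$.
   Context: For $W\subset V$: $\partial_e W=\{e\in E: |e\cap W|=1\}$, $\partial^{\rm ext}_v W=\{x\in V\setminus W: d_G(x,W)=1\}$, $E[W]$ the edges with both endpoints in $W$. $\mathcal{A}_G$ is the set of nonempty finite $W\subset V$ with $G[W]$ connected. Cheeger constant: $C_G=\inf_{W\in\mathcal{A}_G}|\partial_eW|/|W|$. For $W\in\mathcal{A}_G$, $d^{\rm t}_G(\partial_e W)$ is the minimum number of edges of a tree subgraph of $(W\cup\partial^{\rm ext}_vW,\ E[W]\cup\partial_eW)$ whose edge set contains $\partial_eW$; $R_G=\inf_{W\in\mathcal{A}_G}|\partial_eW|/d^{\rm t}_G(\partial_eW)$. *)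

From Stdlib Require Import Reals List Relations.
Import ListNotations.
Open Scope R_scope.

Section G.
Variable V : Type.
Variable adj : V -> V -> Prop.

Definition simple_graph : Prop :=
  (forall x y, adj x y -> adj y x) /\ (forall x, ~ adj x x).

Definition infinite_graph : Prop := ~ exists l : list V, forall v, In v l.

Definition connected_graph : Prop := forall u v, clos_refl_trans V adj u v.

Definition bounded_degree : Prop :=
  exists D : nat, forall v (l : list V), NoDup l ->
    (forall y, In y l -> adj v y) -> (length l <= D)%nat.

(* finite vertex sets are duplicate-free lists; the set A_G *)
Definition induced_connected (W : list V) : Prop :=
  forall u v, In u W -> In v W ->
    clos_refl_trans V (fun x y => In x W /\ In y W /\ adj x y) u v.

Definition in_AG (W : list V) : Prop :=
  NoDup W /\ W <> [] /\ induced_connected W.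

(* |∂_e W| = n : edges {x,y} with x in W, y not in W, counted through the
   oriented pair (x,y) (bijective with the undirected boundary edges) *)
Definition edge_boundary_size (W : list V) (n : nat) : Prop :=
  exists l : list (V * V), NoDup l /\
    (forall p, In p l <-> (In (fst p) W /\ ~ In (snd p) W /\ adj (fst p) (snd p))) /\
    length l = n.

Definition ext_boundary (W : list V) (x : V) : Prop :=
  ~ In x W /\ exists w, In w W /\ adj w x.

(* a finite subgraph given by a vertex list S and an edge list F, each
   undirected edge listed once as an ordered pair *)
Definition Fedge (F : list (V * V)) (x y : V) : Prop := In (x, y) F \/ In (y, x) F.

Fixpoint chain (F : list (V * V)) (x : V) (l : list V) : Prop :=
  match l with
  | [] => True
  | y :: l' => Fedge F x y /\ chain F y l'
  end.

Definition has_cycle (F : list (V * V)) : Prop :=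
  exists x l, NoDup (x :: l) /\ (2 <= length l)%nat /\ chain F x l /\
    Fedge F (last l x) x.

Definition is_subgraph_edges (S : list V) (F : list (V * V)) : Prop :=
  NoDup S /\ NoDup F /\
  (forall x y, In (x, y) F -> ~ In (y, x) F) /\
  (forall x y, In (x, y) F -> adj x y /\ In x S /\ In y S).

Definition is_tree (S : list V) (F : list (V * V)) : Prop :=
  is_subgraph_edges S F /\ S <> [] /\
  (forall u v, In u S -> In v S -> clos_refl_trans V (Fedge F) u v) /\
  ~ has_cycle F.

(* tree subgraph of (W ∪ ∂ext W, E[W] ∪ ∂_e W) whose edge set contains ∂_e W *)
Definition contour_tree (W : list V) (S : list V) (F : list (V * V)) : Prop :=
  is_tree S F /\
  (forall x, In x S -> In x W \/ ext_boundary W x) /\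
  (forall x y, In (x, y) F -> In x W \/ In y W) /\
  (forall x y, In x W -> ~ In y W -> adj x y -> Fedge F x y).

Definition contour_size (W : list V) (d : nat) : Prop :=
  (exists S F, contour_tree W S F /\ length F = d) /\
  (forall S F, contour_tree W S F -> (d <= length F)%nat).

Definition cheeger_ratio (r : R) : Prop :=
  exists W b, in_AG W /\ edge_boundary_size W b /\ r = INR b / INR (length W).

Definition contour_ratio (r : R) : Prop :=
  exists W b d, in_AG W /\ edge_boundary_size W b /\ contour_size W d /\
    r = INR b / INR d.

End G.

Definition is_inf (P : R -> Prop) (m : R) : Prop :=
  (forall r, P r -> m <= r) /\ (forall m', (forall r, P r -> m' <= r) -> m' <= m).

Definition cheeger_constant (V : Type) (adj : V -> V -> Prop) (C : R) : Prop :=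
  is_inf (cheeger_ratio V adj) C.
Definition contour_constant (V : Type) (adj : V -> V -> Prop) (Rc : R) : Prop :=
  is_inf (contour_ratio V adj) Rc.

(* Fix W in A_G with |∂_e W| = b, and a minimum contour tree (S, F) of W, so
   d^t(∂_e W) = |F| = d.  The edges of F split into
   - edges with both ends in W: they form a forest on the vertex list W, and a
     forest on n vertices has at most n edges (remove a leaf and induct);
   - edges with exactly one end in W: oriented from W outwards they are
     distinct boundary edges, so there are at most b of them.
   Hence d <= b + |W|.  Since C_G <= b / |W|, i.e. C_G |W| <= b, we get
   d <= b + b / C_G, i.e. b / d >= C_G / (C_G + 1) (the degenerate case d = 0
   forces b = 0 and C_G = 0).  Taking the infimum over W gives the theorem. *)

From Stdlib Require Import Reals List Relations.
From Stdlib Require Import Lra Lia ClassicalEpsilon Classical Wf_nat.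
Import ListNotations.
Open Scope R_scope.

Definition holds (P : Prop) : bool :=
  if excluded_middle_informative P then true else false.

Lemma holds_true (P : Prop) : holds P = true <-> P.
Proof.
  unfold holds; destruct (excluded_middle_informative P); split; auto; try discriminate;
  contradiction.
Qed.

Lemma filter_holds_In {A : Type} (Q : A -> Prop) (l : list A) (x : A) :
  In x (filter (fun y => holds (Q y)) l) <-> In x l /\ Q x.
Proof. rewrite filter_In, holds_true; tauto. Qed.

Lemma filter_not_holds_In {A : Type} (Q : A -> Prop) (l : list A) (x : A) :
  In x (filter (fun y => negb (holds (Q y))) l) <-> In x l /\ ~ Q x.
Proof.
  rewrite filter_In, Bool.negb_true_iff, <- Bool.not_true_iff_false, holds_true.
  reflexivity.
Qed.

Section Forests.
Variable V : Type.

Lemma Fedge_sym (F : list (V * V)) (x y : V) : Fedge V F x y -> Fedge V F y x.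
Proof. unfold Fedge; tauto. Qed.

Lemma Fedge_mono (F F' : list (V * V)) (x y : V) :
  incl F F' -> Fedge V F x y -> Fedge V F' x y.
Proof. unfold Fedge; intros H [h|h]; [left|right]; apply H; exact h. Qed.

Lemma chain_mono (F F' : list (V * V)) (x : V) (l : list V) :
  incl F F' -> chain V F x l -> chain V F' x l.
Proof.
  intros H; revert x; induction l as [|y l IH]; simpl; auto.
  intros x [h1 h2]; split; eauto using Fedge_mono.
Qed.

Lemma acyclic_incl (F F' : list (V * V)) :
  incl F F' -> ~ has_cycle V F' -> ~ has_cycle V F.
Proof.
  intros H Hac [x [l [h1 [h2 [h3 h4]]]]]. apply Hac.
  exists x, l; repeat split; eauto using chain_mono, Fedge_mono.
Qed.

Lemma chain_app_l (F : list (V * V)) (x : V) (l1 l2 : list V) :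
  chain V F x (l1 ++ l2) -> chain V F x l1.
Proof. revert x; induction l1; simpl; auto. intros x [h1 h2]; split; auto. Qed.

Lemma chord_cycle (F : list (V * V)) (v a w : V) (q : list V) :
  NoDup (v :: a :: q) -> chain V F v (a :: q) -> Fedge V F v w -> In w q ->
  has_cycle V F.
Proof.
  intros Hnd Hch Hf Hw. apply in_split in Hw as [l1 [l2 ->]].
  assert (Hsplit : a :: l1 ++ w :: l2 = (a :: l1 ++ [w]) ++ l2)
    by (simpl; rewrite <- app_assoc; reflexivity).
  exists v, (a :: l1 ++ [w]). split; [|split; [|split]].
  - rewrite Hsplit, app_comm_cons in Hnd. exact (NoDup_app_remove_r _ _ Hnd).
  - simpl; rewrite length_app; simpl; lia.
  - rewrite Hsplit in Hch. exact (chain_app_l _ _ _ _ Hch).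
  - rewrite app_comm_cons, last_last. apply Fedge_sym; exact Hf.
Qed.

Definition is_leaf (F : list (V * V)) (w : V) : Prop :=
  forall u u', Fedge V F w u -> Fedge V F w u' -> u = u'.

Definition forest_on (W : list V) (F : list (V * V)) : Prop :=
  (forall x y, In (x, y) F -> In x W /\ In y W) /\
  (forall x y, In (x, y) F -> x <> y) /\
  NoDup F /\
  (forall x y, In (x, y) F -> ~ In (y, x) F) /\
  ~ has_cycle V F.

Section Leaf.
Variables (W : list V) (F : list (V * V)).
Hypothesis Hends : forall x y, In (x, y) F -> In x W /\ In y W.
Hypothesis Hloop : forall x y, In (x, y) F -> x <> y.
Hypothesis Hacyc : ~ has_cycle V F.

Lemma path_start_one_back_neighbour (v u u' : V) (q : list V) :
  NoDup (v :: q) -> chain V F v q -> Fedge V F v u -> Fedge V F v u' ->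
  In u (v :: q) -> In u' (v :: q) -> u = u'.
Proof.
  intros Hnd Hch Hu Hu' Hin Hin'.
  assert (Hnv : forall z, Fedge V F v z -> z <> v)
    by (intros z [h|h]; apply Hloop in h; auto).
  apply NNPP; intro Hne. apply Hacyc.
  destruct Hin as [->|Hin]; [destruct (Hnv _ Hu eq_refl)|].
  destruct Hin' as [->|Hin']; [destruct (Hnv _ Hu' eq_refl)|].
  destruct q as [|a q]; [destruct Hin|].
  destruct (classic (u = a)) as [->|Hua].
  - destruct Hin' as [->|Hin']; [congruence|]. exact (chord_cycle _ _ _ _ _ Hnd Hch Hu' Hin').
  - destruct Hin as [->|Hin]; [congruence|]. exact (chord_cycle _ _ _ _ _ Hnd Hch Hu Hin).
Qed.

(* Longest-path argument: a simple path in W can be extended backwards until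
   its first vertex is a leaf. *)
Lemma leaf_from_path (n : nat) : forall (v : V) (q : list V),
  (length W <= n + length (v :: q))%nat -> NoDup (v :: q) -> chain V F v q ->
  In v W -> incl q W -> exists w, In w W /\ is_leaf F w.
Proof.
  induction n as [n IH] using lt_wf_ind. intros v q Hlen Hnd Hch Hv Hq.
  destruct (classic (is_leaf F v)) as [Hleaf|Hnleaf]; [exists v; auto|].
  assert (Hextend : forall z, Fedge V F v z -> ~ In z (v :: q) ->
                      exists w, In w W /\ is_leaf F w).
  { intros z Hz Hnz.
    assert (HzW : In z W) by (destruct Hz as [h|h]; apply Hends in h; tauto).
    assert (Hnd' : NoDup (z :: v :: q)) by (constructor; auto).
    assert (Hle : (length (z :: v :: q) <= length W)%nat).
    { apply NoDup_incl_length; auto. intros t [<-|[<-|ht]]; auto. }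
    apply (IH (n - 1)%nat ltac:(simpl in *; lia) z (v :: q));
      [simpl in *; lia | exact Hnd' | split; [apply Fedge_sym|]; auto | exact HzW |].
    intros t [<-|ht]; auto. }
  unfold is_leaf in Hnleaf.
  apply not_all_ex_not in Hnleaf as [u Hnleaf]; apply not_all_ex_not in Hnleaf as [u' Hnleaf].
  apply imply_to_and in Hnleaf as [Hu Hnleaf]; apply imply_to_and in Hnleaf as [Hu' Hne].
  destruct (classic (In u (v :: q))) as [Hiu|Hiu]; [|exact (Hextend u Hu Hiu)].
  destruct (classic (In u' (v :: q))) as [Hiu'|Hiu']; [|exact (Hextend u' Hu' Hiu')].
  exfalso; apply Hne; exact (path_start_one_back_neighbour v u u' q Hnd Hch Hu Hu' Hiu Hiu').
Qed.

Lemma leaf_exists (x : V) : In x W -> exists w, In w W /\ is_leaf F w.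
Proof.
  intro Hx. apply (leaf_from_path (length W) x []); simpl; auto; try lia.
  - constructor; [simpl; auto | constructor].
  - intros t [].
Qed.
End Leaf.

Lemma leaf_incident_edges (F : list (V * V)) (w : V) :
  NoDup F -> (forall x y, In (x, y) F -> ~ In (y, x) F) -> is_leaf F w ->
  (length (filter (fun e => holds (fst e = w \/ snd e = w)) F) <= 1)%nat.
Proof.
  intros HndF Hnrev Hleaf.
  assert (Hnd := NoDup_filter (fun e => holds (fst e = w \/ snd e = w)) HndF).
  assert (Hin := filter_holds_In (fun e : V * V => fst e = w \/ snd e = w) F).
  destruct (filter _ F) as [|[a1 a2] [|[b1 b2] L]]; simpl; try lia.
  exfalso. inversion Hnd as [|? ? Hnab _]; subst. apply Hnab; left.
  destruct (proj1 (Hin (a1, a2)) (or_introl eq_refl)) as [Ha [<-|<-]];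
  destruct (proj1 (Hin (b1, b2)) (or_intror (or_introl eq_refl))) as [Hb [Hbw|Hbw]];
  simpl in *; subst.
  - f_equal. apply Hleaf; left; assumption.
  - assert (a2 = b1) by (apply Hleaf; [left|right]; assumption). subst.
    destruct (Hnrev _ _ Ha Hb).
  - assert (a1 = b2) by (apply Hleaf; [right|left]; assumption). subst.
    destruct (Hnrev _ _ Ha Hb).
  - f_equal. apply Hleaf; right; assumption.
Qed.

Lemma forest_on_remove (W1 W2 : list V) (w : V) (F : list (V * V)) :
  forest_on (W1 ++ w :: W2) F ->
  forest_on (W1 ++ W2) (filter (fun e => negb (holds (fst e = w \/ snd e = w))) F).
Proof.
  intros [Hends [Hloop [HndF [Hnrev Hacyc]]]].
  pose proof (filter_not_holds_In (fun e : V * V => fst e = w \/ snd e = w) F) as Hf.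
  split; [|split; [|split; [|split]]].
  - intros a b Hab. apply Hf in Hab as [Hab Hnw]; simpl in Hnw.
    destruct (Hends a b Hab) as [Ha Hb]. rewrite !in_app_iff in *; simpl in *.
    split; [destruct Ha as [h|[h|h]] | destruct Hb as [h|[h|h]]]; try subst; tauto.
  - intros a b Hab. apply Hf in Hab as [Hab _]. exact (Hloop a b Hab).
  - apply NoDup_filter; exact HndF.
  - intros a b Hab Hba. apply Hf in Hab as [Hab _]; apply Hf in Hba as [Hba _].
    exact (Hnrev a b Hab Hba).
  - apply (acyclic_incl _ F); [|exact Hacyc]. intros e He; apply Hf in He; tauto.
Qed.

Lemma forest_edges_le (W : list V) (F : list (V * V)) :
  NoDup W -> forest_on W F -> (length F <= length W)%nat.
Proof.
  remember (length W) as n eqn:Hn. revert W F Hn.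
  induction n as [|n IH]; intros W F Hn HndW HF.
  - destruct W; [|discriminate]. destruct F as [|[x y] F]; simpl; [lia|].
    destruct HF as [Hends _]. destruct (Hends x y (or_introl eq_refl)) as [[] _].
  - destruct F as [|[x y] F0] eqn:HF0; [simpl; lia|]. rewrite <- HF0 in *.
    pose proof HF as [Hends [Hloop [HndF [Hnrev Hacyc]]]].
    assert (Hx : In x W) by (apply (Hends x y); rewrite HF0; left; reflexivity).
    destruct (leaf_exists W F Hends Hloop Hacyc x Hx) as [w [Hw Hleaf]].
    apply in_split in Hw as [W1 [W2 ->]].
    rewrite <- (filter_length (fun e => holds (fst e = w \/ snd e = w)) F).
    assert (Hrest := IH (W1 ++ W2) _ ltac:(rewrite length_app in *; simpl in *; lia)
                        (NoDup_remove_1 _ _ _ HndW) (forest_on_remove W1 W2 w F HF)).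
    pose proof (leaf_incident_edges F w HndF Hnrev Hleaf).
    rewrite length_app in *; simpl; lia.
Qed.
End Forests.

(* An edge written as an ordered pair, reoriented to start in W when possible;
   crossing edges are counted through this orientation. *)
Definition orient_from {V : Type} (W : list V) (e : V * V) : V * V :=
  if holds (In (fst e) W) then e else (snd e, fst e).

Section ContourTrees.
Variables (V : Type) (adj : V -> V -> Prop).
Hypothesis Hsimple : simple_graph V adj.

(* The edges of a contour tree inside W form a forest on W. *)
Lemma internal_edges_le (W S : list V) (F : list (V * V)) :
  NoDup W -> contour_tree V adj W S F ->
  (length (filter (fun e => holds (In (fst e) W /\ In (snd e) W)) F) <= length W)%nat.
Proof.
  intros HndW [[[_ [HndF [Hnrev Hsub]]] [_ [_ Hacyc]]] _].
  pose proof (filter_holds_In (fun e : V * V => In (fst e) W /\ In (snd e) W) F) as HP.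
  apply forest_edges_le; [exact HndW|]. split; [|split; [|split; [|split]]].
  - intros x y Hxy; apply HP in Hxy; simpl in *; tauto.
  - intros x y Hxy ->. apply HP in Hxy as [Hxy _].
    exact (proj2 Hsimple y (proj1 (Hsub y y Hxy))).
  - apply NoDup_filter; exact HndF.
  - intros x y Hxy Hyx; apply HP in Hxy; apply HP in Hyx. exact (Hnrev x y (proj1 Hxy) (proj1 Hyx)).
  - apply (acyclic_incl _ _ F); [|exact Hacyc]. intros e He; apply HP in He; tauto.
Qed.

(* The edges of a contour tree leaving W, oriented outwards, are distinct
   boundary edges, so there are at most |∂_e W| of them. *)
Lemma crossing_edges_le (W S : list V) (F : list (V * V)) (b : nat) :
  edge_boundary_size V adj W b -> contour_tree V adj W S F ->
  (length (filter (fun e => negb (holds (In (fst e) W /\ In (snd e) W))) F) <= b)%nat.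
Proof.
  intros [l [Hndl [Hl Hlen]]] [[[_ [HndF [Hnrev Hsub]]] _] [_ [Hone _]]].
  pose proof (filter_not_holds_In (fun e : V * V => In (fst e) W /\ In (snd e) W) F) as HnP.
  rewrite <- Hlen, <- (length_map (orient_from W)). apply NoDup_incl_length.
  - apply NoDup_map_NoDup_ForallPairs; [|apply NoDup_filter; exact HndF].
    intros [x y] [x' y'] Hxy Hxy'. apply HnP in Hxy as [Hxy _]; apply HnP in Hxy' as [Hxy' _].
    unfold orient_from; simpl.
    destruct (holds (In x W)), (holds (In x' W)); intro Heq; auto;
      injection Heq as -> ->; auto; exfalso;
      first [exact (Hnrev _ _ Hxy Hxy') | exact (Hnrev _ _ Hxy' Hxy)].
  - intros p Hp. apply in_map_iff in Hp as [[x y] [<- He]].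
    apply HnP in He as [He Hn]; simpl in *. apply Hl.
    destruct (Hsub x y He) as [Hadj _].
    unfold orient_from; simpl. destruct (holds (In x W)) eqn:Hx.
    + rewrite holds_true in Hx. simpl. split; [exact Hx|split; [|exact Hadj]].
      intro Hy; exact (Hn (conj Hx Hy)).
    + assert (Hx' : ~ In x W) by (intro h; rewrite <- holds_true in h; congruence).
      destruct (Hone x y He) as [h|h]; [contradiction|]. simpl.
      repeat split; auto. apply (proj1 Hsimple); exact Hadj.
Qed.

Lemma contour_tree_size (W S : list V) (F : list (V * V)) (b : nat) :
  NoDup W -> edge_boundary_size V adj W b -> contour_tree V adj W S F ->
  (length F <= b + length W)%nat.
Proof.
  intros HndW Hb Hct.
  rewrite <- (filter_length (fun e => holds (In (fst e) W /\ In (snd e) W)) F).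
  pose proof (internal_edges_le W S F HndW Hct).
  pose proof (crossing_edges_le W S F b Hb Hct). lia.
Qed.

(* A contour tree contains every boundary edge, so an empty one means an
   empty boundary. *)
Lemma empty_contour_no_boundary (W S : list V) (b : nat) :
  edge_boundary_size V adj W b -> contour_tree V adj W S [] -> b = 0%nat.
Proof.
  intros [[|p l] [_ [Hl Hlen]]] [_ [_ [_ Hcover]]]; [simpl in Hlen; lia|].
  destruct (proj1 (Hl p) (or_introl eq_refl)) as [h1 [h2 h3]].
  destruct (Hcover _ _ h1 h2 h3) as [[]|[]].
Qed.
End ContourTrees.

(* The real inequality behind the theorem: C w <= b and d <= b + w give
   C / (C + 1) <= b / d (with the convention b / 0 = 0 when b = 0). *)
Lemma ratio_lower_bound (C : R) (b d w : nat) :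
  0 <= C -> (0 < w)%nat -> C * INR w <= INR b -> (d <= b + w)%nat ->
  (d = 0%nat -> b = 0%nat) -> C / (C + 1) <= INR b / INR d.
Proof.
  intros HC Hw HCw Hd Hd0.
  assert (Hwpos : 0 < INR w) by (apply lt_0_INR; exact Hw).
  destruct (Nat.eq_dec d 0) as [->|Hdne].
  - rewrite (Hd0 eq_refl) in *. simpl in HCw.
    assert (C <= 0) by nra. replace C with 0 by lra.
    unfold Rdiv. rewrite !Rmult_0_l. lra.
  - assert (Hdpos : 0 < INR d) by (apply lt_0_INR; lia).
    assert (Hdle : INR d <= INR b + INR w) by (rewrite <- plus_INR; apply le_INR; exact Hd).
    apply (Rmult_le_reg_r (INR d * (C + 1))); [nra|].
    replace (C / (C + 1) * (INR d * (C + 1))) with (C * INR d) by (field; lra).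
    replace (INR b / INR d * (INR d * (C + 1))) with (INR b * (C + 1)) by (field; lra).
    nra.
Qed.

Lemma cheeger_constant_nonneg (V : Type) (adj : V -> V -> Prop) (C : R) :
  cheeger_constant V adj C -> 0 <= C.
Proof.
  intros [_ Hglb]. apply Hglb. intros r [W [b [[_ [HWne _]] [_ ->]]]].
  destruct W as [|w W]; [congruence|]. simpl length.
  apply Rle_mult_inv_pos; [apply pos_INR | apply lt_0_INR; lia].
Qed.

Lemma contour_ratio_ge (V : Type) (adj : V -> V -> Prop) (C r : R) :
  simple_graph V adj -> cheeger_constant V adj C -> contour_ratio V adj r ->
  C / (C + 1) <= r.
Proof.
  intros Hsimple HC [W [b [d [HAG [Hb [[[S [F [Hct HFd]]] _] ->]]]]]].
  pose proof HAG as [HndW [HWne _]].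
  assert (Hw : (0 < length W)%nat) by (destruct W; [congruence | simpl; lia]).
  assert (HCw : C * INR (length W) <= INR b).
  { assert (h : C <= INR b / INR (length W)) by (apply (proj1 HC); exists W, b; auto).
    apply lt_0_INR in Hw. apply (Rmult_le_compat_r (INR (length W))) in h; [|lra].
    replace (INR b / INR (length W) * INR (length W)) with (INR b) in h by (field; lra).
    exact h. }
  apply (ratio_lower_bound C b d (length W)); auto.
  - exact (cheeger_constant_nonneg V adj C HC).
  - rewrite <- HFd. exact (contour_tree_size V adj Hsimple W S F b HndW Hb Hct).
  - intros ->. destruct F; [|discriminate]. exact (empty_contour_no_boundary V adj W S b Hb Hct).
Qed.

Theorem mainTheorem10 (V : Type) (adj : V -> V -> Prop)
  (Hsimple : simple_graph V adj) (Hinf : infinite_graph V)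
  (Hconn : connected_graph V adj) (Hdeg : bounded_degree V adj)
  (C Rg : R) (HC : cheeger_constant V adj C) (HR : contour_constant V adj Rg) :
  Rg >= C / (C + 1) /\ (C > 0 -> Rg > 0).
Proof.
  assert (Hbound : C / (C + 1) <= Rg).
  { apply (proj2 HR). intros r Hr. exact (contour_ratio_ge V adj C r Hsimple HC Hr). }
  split; [lra|].
  intro Hpos. assert (0 < C / (C + 1)) by (apply Rdiv_lt_0_compat; lra). lra.
Qed.
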